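(* Let $n\geq 3$ be an integer and let $$\mathcal P_n=\Big\{(\kappa,\lambda)\in\mathbb R^2:\ \kappa\sin(x)+\sum_{k=2}^{n-1}\sin(kx)+\lambda\sin(nx)\geq 0\ \text{for all } x\in[0,\pi]\Big\}.$$ For every $\lambda\in\mathbb R$ there exists $\kappa_0=\kappa_0(\lambda;n)$ such that $(\kappa,\lambda)\in\mathcal P_n$ if and only if $\kappa\geq\kappa_0$. Moreover: (i) If $n$ is odd, then $\kappa_0=\frac{n+1}{2}-n\lambda$ for $\lambda\in\big(-\infty,\frac{2n-3}{4n}\big]$; $\kappa_0>\frac{n+1}{2}-n\lambda$ for $\lambda\in\big(\frac{2n-3}{4n},\frac12\big]$; and $\kappa_0>1$ for $\lambda\in\big(\frac12,\infty\big)$. (ii) If $n$ is even, then $\kappa_0>1$ for $\lambda\in\big(-\infty,\frac12\big)$, and $\kappa_0=n\lambda-\frac{n-2}{2}$ for $\lambda\in\big[\frac12,\infty\big)$. *)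

From Stdlib Require Import Reals Arith.
Open Scope R_scope.

(* mid_sin_sum n x = sum_{k=2}^{n-1} sin (k x)  (empty sum = 0) *)
Fixpoint mid_sin_sum (n : nat) (x : R) : R :=
  match n with
  | O => 0
  | S m => mid_sin_sum m x + (if (2 <=? m)%nat then sin (INR m * x) else 0)
  end.

Definition trig_poly (n : nat) (kappa lambda x : R) : R :=
  kappa * sin x + mid_sin_sum n x + lambda * sin (INR n * x).

Definition in_Pn (n : nat) (kappa lambda : R) : Prop :=
  forall x : R, 0 <= x <= PI -> 0 <= trig_poly n kappa lambda x.

From Stdlib Require Import Reals Arith Lra Lia Psatz.
Open Scope R_scope.

(* Multiplying by 2 sin x turns the polynomial into
   2 (kappa - 1) sin^2 x + (1 + cos x) (1 - cos nx) + (2 lambda - 1) sin x sin nx,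
   so (kappa, lambda) lies in P_n exactly when kappa dominates a pointwise threshold
   kappa_at n lambda x on (0, pi), and kappa0 is the supremum of that threshold.
   Letting x tend to pi shows kappa0 >= (n+1)/2 - n lambda for odd n and
   kappa0 >= n lambda - (n-2)/2 for even n.  The matching upper bounds come from
   |sin nx| <= n sin x (even n, lambda >= 1/2) and, for odd n and
   lambda <= (2n-3)/(4n), from 2n (1 + cos x)(1 - cos nx) + n sin^2 x >= 3 sin x sin nx,
   which after the substitution x = pi - 2h follows from Taylor estimates.  The strict
   inequalities are witnessed by explicit points: for lambda <> 1/2 a point with nx
   close to 2 pi has threshold above 1, and for odd n and lambda slightly below 1/2 the
   threshold just below pi overshoots its limit. *)

Lemma sin_ge_taylor3 a : 0 <= a <= PI -> a - a ^ 3 / 6 <= sin a.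
Proof.
  intros Ha. destruct (sin_bound a 0 (proj1 Ha) (proj2 Ha)) as [H _].
  unfold sin_approx, sin_term in H. simpl in H. lra.
Qed.

Lemma sin_le_taylor5 a : 0 <= a <= PI -> sin a <= a - a ^ 3 / 6 + a ^ 5 / 120.
Proof.
  intros Ha. destruct (sin_bound a 0 (proj1 Ha) (proj2 Ha)) as [_ H].
  unfold sin_approx, sin_term in H. simpl in H. lra.
Qed.

Lemma cos_ge_taylor6 a : - PI / 2 <= a <= PI / 2 -> 1 - a ^ 2 / 2 + a ^ 4 / 24 - a ^ 6 / 720 <= cos a.
Proof.
  intros Ha. destruct (cos_bound a 1 (proj1 Ha) (proj2 Ha)) as [H _].
  unfold cos_approx, cos_term in H. simpl in H. lra.
Qed.

Lemma cos_le_taylor4 a : - PI / 2 <= a <= PI / 2 -> cos a <= 1 - a ^ 2 / 2 + a ^ 4 / 24.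
Proof.
  intros Ha. destruct (cos_bound a 0 (proj1 Ha) (proj2 Ha)) as [_ H].
  unfold cos_approx, cos_term in H. simpl in H. lra.
Qed.

Lemma one_sub_cos_le z : 0 <= z <= 1 -> 0 <= 1 - cos z <= z ^ 2 / 2.
Proof.
  intros Hz. pose proof PI2_3_2.
  pose proof (cos_ge_taylor6 z ltac:(split; lra)). pose proof (COS_bound z).
  assert (0 <= z ^ 4) by (apply pow_le; lra).
  assert (z ^ 2 <= 1) by nra.
  assert (z ^ 6 <= z ^ 4) by (replace (z ^ 6) with (z ^ 4 * z ^ 2) by ring; nra).
  split; lra.
Qed.

Lemma sin_sqr_add_cos_sqr x : sin x ^ 2 + cos x ^ 2 = 1.
Proof. rewrite <- (sin2_cos2 x). unfold Rsqr. ring. Qed.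

Lemma Rabs_sin_INR_mul_le n x : 0 <= x <= PI -> Rabs (sin (INR n * x)) <= INR n * sin x.
Proof.
  intros Hx. assert (Hs : 0 <= sin x) by (apply sin_ge_0; lra).
  induction n as [|n IH].
  - simpl. rewrite Rmult_0_l, sin_0, Rabs_R0. lra.
  - rewrite S_INR. replace ((INR n + 1) * x) with (INR n * x + x) by ring.
    rewrite sin_plus, Rmult_plus_distr_r, Rmult_1_l.
    assert (Rabs (cos x) <= 1) by (apply Rabs_le; apply COS_bound).
    assert (Rabs (cos (INR n * x)) <= 1) by (apply Rabs_le; apply COS_bound).
    pose proof (Rabs_triang (sin (INR n * x) * cos x) (cos (INR n * x) * sin x)) as Htri.
    rewrite !Rabs_mult, (Rabs_pos_eq (sin x)) in Htri by lra.
    pose proof (Rabs_pos (sin (INR n * x))). pose proof (Rabs_pos (cos x)).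
    nra.
Qed.

Lemma INR_ge_3 n : (3 <= n)%nat -> 3 <= INR n.
Proof. intros Hn. replace 3 with (INR 3) by (simpl; lra). now apply le_INR. Qed.

Lemma sin_le_on_middle a y : 0 < a <= PI/2 -> a <= y <= PI - a -> sin a <= sin y.
Proof.
  intros Ha Hy. destruct (Rle_lt_dec y (PI/2)).
  - apply sin_incr_1; lra.
  - rewrite <- (sin_PI_x y). apply sin_incr_1; lra.
Qed.

Lemma cos_sin_INR_mul_PI_sub_odd n u : Nat.Odd n ->
  cos (INR n * (PI - u)) = - cos (INR n * u) /\ sin (INR n * (PI - u)) = sin (INR n * u).
Proof.
  intros [k ->].
  replace (INR (2*k+1) * (PI - u)) with ((PI - INR (2*k+1) * u) + 2 * INR k * PI)
    by (rewrite plus_INR, mult_INR; simpl; ring).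
  rewrite cos_period, sin_period, cos_minus, sin_minus, cos_PI, sin_PI. split; ring.
Qed.

Lemma cos_sin_INR_mul_PI_sub_even n u : Nat.Even n ->
  cos (INR n * (PI - u)) = cos (INR n * u) /\ sin (INR n * (PI - u)) = - sin (INR n * u).
Proof.
  intros [k ->].
  replace (INR (2*k) * (PI - u)) with (- (INR (2*k) * u) + 2 * INR k * PI)
    by (rewrite mult_INR; simpl; ring).
  rewrite cos_period, sin_period, cos_neg, sin_neg. split; ring.
Qed.

(** * Reduction to a pointwise threshold *)

Definition reduced_poly (n : nat) (l x : R) : R :=
  (1 + cos x) * (1 - cos (INR n * x)) + (2 * l - 1) * sin x * sin (INR n * x).

Lemma two_sin_mul_mid_sin_sum m x :
  2 * sin x * mid_sin_sum (m + 2) x =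
  (1 + cos x) * (1 - cos (INR (m + 2) * x)) - sin x * sin (INR (m + 2) * x) - 2 * sin x ^ 2.
Proof.
  induction m as [|m IH].
  - simpl mid_sin_sum. replace (INR (0 + 2)) with 2 by (simpl; lra).
    rewrite cos_2a, sin_2a. apply Rminus_diag_uniq.
    transitivity ((1 + cos x) * (sin x ^ 2 + cos x ^ 2 - 1));
      [ring | rewrite sin_sqr_add_cos_sqr; ring].
  - replace (S m + 2)%nat with (S (m + 2)) by lia. cbn [mid_sin_sum].
    replace (2 <=? m + 2)%nat with true by (symmetry; apply Nat.leb_le; lia).
    rewrite S_INR, Rmult_plus_distr_l, IH.
    replace ((INR (m + 2) + 1) * x) with (INR (m + 2) * x + x) by ring.
    rewrite cos_plus, sin_plus. apply Rminus_diag_uniq.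
    transitivity (cos (INR (m + 2) * x) * (sin x ^ 2 + cos x ^ 2 - 1));
      [ring | rewrite sin_sqr_add_cos_sqr; ring].
Qed.

Lemma two_sin_mul_trig_poly n k l x : (2 <= n)%nat ->
  2 * sin x * trig_poly n k l x = 2 * (k - 1) * sin x ^ 2 + reduced_poly n l x.
Proof.
  intros Hn. replace n with ((n - 2) + 2)%nat by lia.
  unfold trig_poly, reduced_poly.
  pose proof (two_sin_mul_mid_sin_sum (n - 2) x). lra.
Qed.

Lemma mid_sin_sum_eq_0 n x : (forall m, sin (INR m * x) = 0) -> mid_sin_sum n x = 0.
Proof.
  intros H. induction n as [|n IH]; cbn [mid_sin_sum]; [lra|].
  rewrite IH, H. destruct (2 <=? n)%nat; lra.
Qed.

Lemma sin_INR_mul_PI m : sin (INR m * PI) = 0.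
Proof. apply sin_eq_0_1. exists (Z.of_nat m). now rewrite INR_IZR_INZ. Qed.

Lemma trig_poly_0 n k l : trig_poly n k l 0 = 0.
Proof.
  unfold trig_poly. rewrite mid_sin_sum_eq_0 by (intro; rewrite Rmult_0_r; apply sin_0).
  rewrite Rmult_0_r, sin_0. ring.
Qed.

Lemma trig_poly_PI n k l : trig_poly n k l PI = 0.
Proof.
  unfold trig_poly. rewrite mid_sin_sum_eq_0 by apply sin_INR_mul_PI.
  rewrite sin_INR_mul_PI, sin_PI. ring.
Qed.

Definition kappa_at (n : nat) (l x : R) : R := 1 - reduced_poly n l x / (2 * sin x ^ 2).

Lemma kappa_at_le_iff n l x b : 0 < sin x ->
  (kappa_at n l x <= b <-> 2 * sin x ^ 2 * (1 - b) <= reduced_poly n l x).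
Proof.
  intros Hs. unfold kappa_at.
  assert (HD : 0 < 2 * sin x ^ 2) by nra.
  set (D := 2 * sin x ^ 2) in *. set (r := reduced_poly n l x / D).
  assert (E : reduced_poly n l x = r * D) by (unfold r; field; lra).
  rewrite E. split; intro H; nra.
Qed.

Lemma kappa_at_gt_iff n l x b : 0 < sin x ->
  (b < kappa_at n l x <-> reduced_poly n l x < 2 * sin x ^ 2 * (1 - b)).
Proof.
  intros Hs. pose proof (kappa_at_le_iff n l x b Hs).
  split; intro H'; apply Rnot_le_lt; intro; apply (Rlt_not_le _ _ H'); tauto.
Qed.

Lemma kappa_at_le_bound n l x : 0 < x < PI ->
  kappa_at n l x <= 1 + INR n * Rabs (2 * l - 1) / 2.
Proof.
  intros Hx. assert (Hs : 0 < sin x) by (apply sin_gt_0; lra).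
  apply kappa_at_le_iff; [exact Hs|]. unfold reduced_poly.
  set (q := 2 * l - 1). set (S := sin (INR n * x)).
  pose proof (Rabs_sin_INR_mul_le n x ltac:(lra)) as HS. fold S in HS.
  assert (0 <= (1 + cos x) * (1 - cos (INR n * x)))
    by (pose proof (COS_bound x); pose proof (COS_bound (INR n * x)); apply Rmult_le_pos; lra).
  assert (Rabs (q * S) <= Rabs q * (INR n * sin x))
    by (rewrite Rabs_mult; apply Rmult_le_compat_l; [apply Rabs_pos | exact HS]).
  assert (- (Rabs q * (INR n * sin x)) <= q * S)
    by (pose proof (Rle_abs (- (q * S))); rewrite Rabs_Ropp in *; lra).
  nra.
Qed.

Definition kappa_at_values (n : nat) (l v : R) : Prop :=
  exists x, 0 < x < PI /\ v = kappa_at n l x.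

Lemma kappa_at_values_lub n l : exists k0, is_lub (kappa_at_values n l) k0.
Proof.
  apply upper_bound_thm.
  - exists (1 + INR n * Rabs (2 * l - 1) / 2).
    intros v [x [Hx ->]]. now apply kappa_at_le_bound.
  - exists (kappa_at n l (PI / 2)), (PI / 2). split; [|reflexivity].
    pose proof PI_RGT_0. lra.
Qed.

Section Threshold.

Variables (n : nat) (l k0 : R).
Hypothesis k0_lub : is_lub (kappa_at_values n l) k0.

Lemma kappa_at_le_threshold x : 0 < x < PI -> kappa_at n l x <= k0.
Proof. intros Hx. apply (proj1 k0_lub). now exists x. Qed.

Lemma threshold_le b : (forall x, 0 < x < PI -> kappa_at n l x <= b) -> k0 <= b.
Proof. intros Hb. apply (proj2 k0_lub). intros v [x [Hx ->]]. auto. Qed.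

Lemma threshold_eq c :
  (forall x, 0 < x < PI -> kappa_at n l x <= c) ->
  (forall eps, 0 < eps -> exists x, 0 < x < PI /\ c - eps < kappa_at n l x) ->
  k0 = c.
Proof.
  intros Hle Happrox. assert (k0 <= c) by now apply threshold_le.
  destruct (Rle_lt_dec c k0); [lra|].
  destruct (Happrox (c - k0) ltac:(lra)) as [x [Hx Hv]].
  pose proof (kappa_at_le_threshold x Hx). lra.
Qed.

Lemma threshold_gt c : (exists x, 0 < x < PI /\ c < kappa_at n l x) -> k0 > c.
Proof. intros [x [Hx Hv]]. pose proof (kappa_at_le_threshold x Hx). lra. Qed.

Lemma in_Pn_iff_threshold k : (2 <= n)%nat -> (in_Pn n k l <-> k0 <= k).
Proof.
  intros Hn. split.
  - intros HP. apply threshold_le. intros x Hx.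
    assert (Hs : 0 < sin x) by (apply sin_gt_0; lra).
    apply kappa_at_le_iff; [exact Hs|].
    pose proof (HP x ltac:(lra)). pose proof (two_sin_mul_trig_poly n k l x Hn). nra.
  - intros Hk x Hx.
    destruct (Req_dec x 0) as [->|H0]; [rewrite trig_poly_0; lra|].
    destruct (Req_dec x PI) as [->|H1]; [rewrite trig_poly_PI; lra|].
    assert (Hs : 0 < sin x) by (apply sin_gt_0; lra).
    assert (Hv : kappa_at n l x <= k) by (pose proof (kappa_at_le_threshold x ltac:(lra)); lra).
    apply (kappa_at_le_iff n l x k Hs) in Hv.
    pose proof (two_sin_mul_trig_poly n k l x Hn). nra.
Qed.

End Threshold.

(** * Thresholds above 1 *)

Lemma PI_div_two_mul_bounds N : 1 <= N -> 0 < PI / (2 * N) <= PI / 2.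
Proof.
  intros HN. pose proof PI_RGT_0. split; [apply Rdiv_lt_0_compat; lra|].
  apply Rmult_le_reg_r with (2 * N); [lra|].
  replace (PI / (2 * N) * (2 * N)) with PI by (field; lra). nra.
Qed.

Lemma window_point (N t : R) : 3 <= N -> - (1/2) <= t <= 1/2 ->
  exists x, PI / (2 * N) <= x <= PI - PI / (2 * N) /\
            cos (N * x) = cos t /\ sin (N * x) = sin t.
Proof.
  intros HN Ht. pose proof PI2_3_2.
  assert (HiN : 0 < / N) by (apply Rinv_0_lt_compat; lra).
  exists ((2 * PI + t) / N).
  replace (N * ((2 * PI + t) / N)) with (t + 2 * INR 1 * PI) by (simpl; field; lra).
  rewrite cos_period, sin_period. split; [|split; reflexivity].
  replace (PI / (2 * N)) with (PI / 2 * / N) by (field; lra).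
  replace (PI - PI / 2 * / N) with ((N * PI - PI / 2) * / N) by (field; lra).
  unfold Rdiv. split; apply Rmult_le_compat_r; nra.
Qed.

Lemma window_estimate (N p r x : R) : 3 <= N -> 0 < r <= 1/2 ->
  2 * r < p * sin (PI / (2 * N)) -> PI / (2 * N) <= x <= PI - PI / (2 * N) ->
  (1 + cos x) * (1 - cos r) < p * sin x * sin r.
Proof.
  intros HN Hr Hp Hx. pose proof PI2_3_2.
  pose proof (PI_div_two_mul_bounds N ltac:(lra)) as Ha.
  assert (Hs0 : 0 < sin (PI / (2 * N))) by (apply sin_gt_0; lra).
  assert (Hsx : sin (PI / (2 * N)) <= sin x) by (apply sin_le_on_middle; lra).
  assert (Hp0 : 0 < p) by nra.
  destruct (one_sub_cos_le r ltac:(split; lra)) as [C0 C1].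
  assert (Hsr : r / 2 <= sin r) by (pose proof (sin_ge_taylor3 r ltac:(split; lra)); nra).
  assert ((1 + cos x) * (1 - cos r) <= 2 * (r ^ 2 / 2))
    by (pose proof (COS_bound x); apply Rmult_le_compat; lra).
  assert (p * sin (PI / (2 * N)) * (r / 2) <= p * sin x * sin r)
    by (apply Rmult_le_compat; nra).
  nra.
Qed.

(* For N x = 2 pi +- r the first summand is O(r^2) while the second has exact order r;
   the sign of +-r is chosen opposite to the sign of q. *)
Lemma reduced_poly_neg_witness (N q : R) : 3 <= N -> q <> 0 ->
  exists x, 0 < x < PI /\ (1 + cos x) * (1 - cos (N * x)) + q * sin x * sin (N * x) < 0.
Proof.
  intros HN Hq. pose proof PI2_3_2.
  pose proof (PI_div_two_mul_bounds N ltac:(lra)) as Ha.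
  set (s0 := sin (PI / (2 * N))).
  assert (Hs0 : 0 < s0) by (apply sin_gt_0; lra).
  assert (Hqa : 0 < Rabs q) by now apply Rabs_pos_lt.
  assert (Hrad : exists r, (0 < r <= 1/2) /\ 2 * r < Rabs q * s0).
  { exists (Rmin (1/2) (Rabs q * s0 / 4)).
    pose proof (Rmin_r (1/2) (Rabs q * s0 / 4)).
    split; [split; [apply Rmin_glb_lt; nra | apply Rmin_l] | nra]. }
  destruct Hrad as [r [Hr Hr2]].
  destruct (Rlt_le_dec q 0) as [Hneg|Hnn].
  - rewrite Rabs_left in Hr2 by lra.
    destruct (window_point N r HN ltac:(split; lra)) as [x [Hx [Hc Hs]]].
    exists x. split; [lra|]. rewrite Hc, Hs.
    pose proof (window_estimate N (- q) r x HN Hr Hr2 Hx). lra.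
  - rewrite Rabs_pos_eq in Hr2 by lra.
    destruct (window_point N (- r) HN ltac:(split; lra)) as [x [Hx [Hc Hs]]].
    exists x. split; [lra|]. rewrite Hc, Hs, cos_neg, sin_neg.
    pose proof (window_estimate N q r x HN Hr Hr2 Hx). lra.
Qed.

Lemma kappa_at_gt_one n l : (3 <= n)%nat -> l <> 1/2 ->
  exists x, 0 < x < PI /\ 1 < kappa_at n l x.
Proof.
  intros Hn Hl.
  destruct (reduced_poly_neg_witness (INR n) (2 * l - 1) (INR_ge_3 n Hn) ltac:(lra))
    as [x [Hx Hneg]].
  exists x. split; [exact Hx|].
  apply kappa_at_gt_iff; [apply sin_gt_0; lra|]. unfold reduced_poly. lra.
Qed.

(** * The limit at pi and the even case *)

Lemma small_angle_defect_le (N p u : R) : 1 <= N -> 0 <= p -> 0 < u -> N * u <= 1 ->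
  (1 - cos u) * (1 - cos (N * u)) + p * sin u * (N * sin u - sin (N * u))
  <= u ^ 4 * (N ^ 2 / 4 + p * N ^ 3 / 6).
Proof.
  intros HN Hp Hu HNu. pose proof PI2_3_2.
  destruct (one_sub_cos_le u ltac:(split; nra)) as [C0 C1].
  destruct (one_sub_cos_le (N * u) ltac:(split; nra)) as [C2 C3].
  assert (S0 : 0 <= sin u) by (apply sin_ge_0; nra).
  assert (S1 : sin u <= u) by (left; apply sin_lt_x; lra).
  pose proof (sin_ge_taylor3 (N * u) ltac:(split; nra)).
  assert (HD : N * sin u - sin (N * u) <= N ^ 3 * u ^ 3 / 6) by nra.
  assert (0 <= N ^ 3 * u ^ 3) by (apply Rmult_le_pos; apply pow_le; lra).
  assert ((1 - cos u) * (1 - cos (N * u)) <= u ^ 2 / 2 * ((N * u) ^ 2 / 2))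
    by (apply Rmult_le_compat; lra).
  assert (p * sin u * (N * sin u - sin (N * u)) <= p * u * (N ^ 3 * u ^ 3 / 6)).
  { apply Rle_trans with (p * sin u * (N ^ 3 * u ^ 3 / 6));
      [apply Rmult_le_compat_l; nra | apply Rmult_le_compat_r; nra]. }
  nra.
Qed.

Lemma small_angle_defect_lt (N p eps : R) : 1 <= N -> 0 <= p -> 0 < eps ->
  exists u, 0 < u /\ N * u <= 1 /\
    (1 - cos u) * (1 - cos (N * u)) + p * sin u * (N * sin u - sin (N * u))
    < 2 * eps * sin u ^ 2.
Proof.
  intros HN Hp He. pose proof PI2_3_2.
  set (K := N ^ 2 / 4 + p * N ^ 3 / 6).
  assert (0 <= p * N ^ 3) by (apply Rmult_le_pos; [lra | apply pow_le; lra]).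
  assert (HK : 0 <= K) by (unfold K; nra).
  assert (Hu : exists u, 0 < u /\ N * u <= 1 /\ u * (2 * K + 2) <= eps).
  { exists (Rmin (1 / N) (eps / (2 * K + 2))).
    pose proof (Rmin_l (1 / N) (eps / (2 * K + 2))).
    pose proof (Rmin_r (1 / N) (eps / (2 * K + 2))).
    split; [apply Rmin_glb_lt; apply Rdiv_lt_0_compat; lra|]. split.
    - replace 1 with (N * (1 / N)) at 2 by (field; lra). apply Rmult_le_compat_l; lra.
    - replace eps with (eps / (2 * K + 2) * (2 * K + 2)) at 2 by (field; lra).
      apply Rmult_le_compat_r; lra. }
  destruct Hu as [u [Hu0 [HNu Hue]]]. exists u. split; [lra | split; [lra|]].
  assert (u <= 1) by nra.
  pose proof (small_angle_defect_le N p u HN Hp Hu0 HNu) as Hdef. fold K in Hdef.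
  assert (Hsu : u / 2 <= sin u) by (pose proof (sin_ge_taylor3 u ltac:(split; lra)); nra).
  assert (u * K < eps / 2) by nra.
  assert (u ^ 2 * K <= u * K).
  { replace (u ^ 2 * K) with (u * (u * K)) by ring.
    assert (0 <= u * K) by (apply Rmult_le_pos; lra).
    replace (u * K) with (1 * (u * K)) at 2 by ring.
    apply Rmult_le_compat_r; lra. }
  assert (u ^ 4 * K < eps / 2 * u ^ 2).
  { replace (u ^ 4 * K) with (u ^ 2 * (u ^ 2 * K)) by ring. rewrite (Rmult_comm (eps / 2)).
    apply Rmult_lt_compat_l; [nra | lra]. }
  assert (u ^ 2 / 4 <= sin u ^ 2)
    by (replace (u ^ 2 / 4) with ((u / 2) ^ 2) by field; apply pow_incr; lra).
  nra.
Qed.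

Lemma reduced_poly_PI_sub_odd n l u : Nat.Odd n ->
  reduced_poly n l (PI - u) - 2 * sin u ^ 2 * (1 - ((INR n + 1) / 2 - INR n * l)) =
  (1 - cos u) * (cos (INR n * u) - cos u)
  + (1 - 2 * l) * sin u * (INR n * sin u - sin (INR n * u)).
Proof.
  intros Ho. unfold reduced_poly.
  destruct (cos_sin_INR_mul_PI_sub_odd n u Ho) as [-> ->].
  rewrite sin_PI_x, Rtrigo_facts.cos_pi_minus. apply Rminus_diag_uniq.
  transitivity (1 - (sin u ^ 2 + cos u ^ 2)); [field|].
  rewrite sin_sqr_add_cos_sqr. ring.
Qed.

Lemma reduced_poly_PI_sub_even n l u : Nat.Even n ->
  reduced_poly n l (PI - u) - 2 * sin u ^ 2 * (1 - (INR n * l - (INR n - 2) / 2)) =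
  (1 - cos u) * (1 - cos (INR n * u))
  + (2 * l - 1) * sin u * (INR n * sin u - sin (INR n * u)).
Proof.
  intros He. unfold reduced_poly.
  destruct (cos_sin_INR_mul_PI_sub_even n u He) as [-> ->].
  rewrite sin_PI_x, Rtrigo_facts.cos_pi_minus. field.
Qed.

Lemma kappa_at_PI_sub_gt n l u c : 0 < u < PI ->
  reduced_poly n l (PI - u) < 2 * sin u ^ 2 * (1 - c) -> c < kappa_at n l (PI - u).
Proof.
  intros Hu H. apply kappa_at_gt_iff; rewrite sin_PI_x; [apply sin_gt_0; lra | exact H].
Qed.

Lemma kappa_at_near_PI_odd n l eps : Nat.Odd n -> l <= 1/2 -> 0 < eps ->
  exists x, 0 < x < PI /\ (INR n + 1) / 2 - INR n * l - eps < kappa_at n l x.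
Proof.
  intros Ho Hl He. pose proof PI2_3_2.
  assert (HN : 1 <= INR n)
    by (destruct Ho as [k ->]; replace 1 with (INR 1) by reflexivity; apply le_INR; lia).
  destruct (small_angle_defect_lt (INR n) (1 - 2 * l) eps HN ltac:(lra) He)
    as [u [Hu [HNu Hlt]]].
  exists (PI - u). split; [nra|]. apply kappa_at_PI_sub_gt; [nra|].
  pose proof (reduced_poly_PI_sub_odd n l u Ho).
  assert (cos (INR n * u) <= cos u) by (apply cos_decr_1; nra).
  destruct (one_sub_cos_le u ltac:(split; nra)).
  destruct (one_sub_cos_le (INR n * u) ltac:(split; nra)).
  assert ((1 - cos u) * (cos (INR n * u) - cos u) <= (1 - cos u) * (1 - cos (INR n * u))) by nra.
  lra.
Qed.

Lemma kappa_at_near_PI_even n l eps : (1 <= n)%nat -> Nat.Even n -> 1/2 <= l -> 0 < eps ->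
  exists x, 0 < x < PI /\ INR n * l - (INR n - 2) / 2 - eps < kappa_at n l x.
Proof.
  intros Hn He Hl Heps. pose proof PI2_3_2.
  assert (HN : 1 <= INR n) by (replace 1 with (INR 1) by reflexivity; now apply le_INR).
  destruct (small_angle_defect_lt (INR n) (2 * l - 1) eps HN ltac:(lra) Heps)
    as [u [Hu [HNu Hlt]]].
  exists (PI - u). split; [nra|]. apply kappa_at_PI_sub_gt; [nra|].
  pose proof (reduced_poly_PI_sub_even n l u He). lra.
Qed.

Lemma kappa_at_le_of_half_le n l x : 1/2 <= l -> 0 < x < PI ->
  kappa_at n l x <= INR n * l - (INR n - 2) / 2.
Proof.
  intros Hl Hx. assert (Hs : 0 < sin x) by (apply sin_gt_0; lra).
  apply kappa_at_le_iff; [exact Hs|]. unfold reduced_poly.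
  pose proof (Rabs_sin_INR_mul_le n x ltac:(lra)) as HS.
  pose proof (Rle_abs (- sin (INR n * x))). rewrite Rabs_Ropp in *.
  assert (0 <= (1 + cos x) * (1 - cos (INR n * x)))
    by (pose proof (COS_bound x); pose proof (COS_bound (INR n * x)); apply Rmult_le_pos; lra).
  assert (0 <= (2 * l - 1) * (sin x * (sin (INR n * x) + INR n * sin x)))
    by (apply Rmult_le_pos; [lra | apply Rmult_le_pos; lra]).
  nra.
Qed.

(** * Odd n: overshoot for lambda slightly below 1/2 *)

Lemma cos_sub_cos_mul_ge (N u : R) : 3 <= N -> 0 < u -> N * u <= 1 ->
  (N ^ 2 - 1) * u ^ 2 * (1/2 - (N * u) ^ 2 / 20) <= cos u - cos (N * u).
Proof.
  intros HN Hu HNu. pose proof PI2_3_2.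
  pose proof (cos_ge_taylor6 u ltac:(split; nra)).
  pose proof (cos_le_taylor4 (N * u) ltac:(split; nra)).
  assert (E : (1 - u ^ 2 / 2 + u ^ 4 / 24 - u ^ 6 / 720)
              - (1 - (N * u) ^ 2 / 2 + (N * u) ^ 4 / 24)
              = (N ^ 2 - 1) * u ^ 2 / 2 - (N ^ 2 - 1) * ((N * u) ^ 2 + u ^ 2) * u ^ 2 / 24
                - (u ^ 2) ^ 3 / 720) by field.
  set (w := u ^ 2) in *. set (rho := N * u) in *. set (A := N ^ 2 - 1) in *.
  assert (Hw : 0 < w) by (unfold w; nra).
  assert (HN2 : 9 <= N ^ 2) by nra.
  assert (Hrw : N ^ 2 * w = rho ^ 2) by (unfold w, rho; ring).
  assert (Hw9 : w <= rho ^ 2 / 9)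
    by (assert (9 * w <= N ^ 2 * w) by (apply Rmult_le_compat_r; lra); lra).
  assert (Hr0 : 0 < rho) by (unfold rho; nra).
  assert (Hr1 : rho ^ 2 <= 1) by nra.
  assert (HA : 8 <= A) by (unfold A; lra).
  assert (A * (rho ^ 2 + w) * w / 24 <= A * rho ^ 2 * w / 21.6).
  { assert (0 <= A * w) by nra. nra. }
  assert (w ^ 3 <= A * rho ^ 2 * w / 81).
  { assert (w ^ 2 <= rho ^ 2 / 81) by nra. assert (0 <= w ^ 2) by nra.
    replace (w ^ 3) with (w ^ 2 * w) by ring. nra. }
  nra.
Qed.

Lemma one_sub_cos_mul_cos_sub_cos_ge (N u : R) : 3 <= N -> 0 < u -> N * u <= 1 ->
  u ^ 4 * ((1/2 - u ^ 2 / 24) * (N ^ 2 - 1) * (1/2 - (N * u) ^ 2 / 20))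
  <= (1 - cos u) * (cos u - cos (N * u)).
Proof.
  intros HN Hu HNu. pose proof PI2_3_2.
  pose proof (cos_le_taylor4 u ltac:(split; nra)).
  pose proof (cos_sub_cos_mul_ge N u HN Hu HNu).
  assert (u <= 1/3) by nra.
  assert (0 < N * u) by nra.
  assert (0 <= (N * u) ^ 2 <= 1) by (split; [apply pow2_ge_0 | nra]).
  replace (u ^ 4 * ((1/2 - u ^ 2 / 24) * (N ^ 2 - 1) * (1/2 - (N * u) ^ 2 / 20)))
    with (u ^ 2 * (1/2 - u ^ 2 / 24) * ((N ^ 2 - 1) * u ^ 2 * (1/2 - (N * u) ^ 2 / 20)))
    by ring.
  assert (0 <= u ^ 2) by apply pow2_ge_0.
  assert (0 <= (N ^ 2 - 1) * u ^ 2) by (apply Rmult_le_pos; nra).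
  apply Rmult_le_compat; try lra; apply Rmult_le_pos; nra.
Qed.

Lemma sin_mul_N_sin_sub_sin_le (N u : R) : 1 <= N -> 0 < u -> N * u <= 1 ->
  sin u * (N * sin u - sin (N * u)) <= N * u ^ 4 * ((N ^ 2 - 1) / 6 + u ^ 2 / 120).
Proof.
  intros HN Hu HNu. pose proof PI2_3_2.
  pose proof (sin_le_taylor5 u ltac:(split; nra)).
  pose proof (sin_ge_taylor3 (N * u) ltac:(split; nra)).
  assert (S0 : 0 <= sin u) by (apply sin_ge_0; nra).
  assert (S1 : sin u <= u) by (left; apply sin_lt_x; nra).
  assert (HB : N * sin u - sin (N * u) <= N * u ^ 3 * ((N ^ 2 - 1) / 6 + u ^ 2 / 120)).
  { assert (N * sin u <= N * (u - u ^ 3 / 6 + u ^ 5 / 120)) by (apply Rmult_le_compat_l; lra).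
    assert (E : N * (u - u ^ 3 / 6 + u ^ 5 / 120) - (N * u - (N * u) ^ 3 / 6)
                = N * u ^ 3 * ((N ^ 2 - 1) / 6 + u ^ 2 / 120)) by field.
    lra. }
  assert (0 <= N * u ^ 3 * ((N ^ 2 - 1) / 6 + u ^ 2 / 120))
    by (apply Rmult_le_pos; [apply Rmult_le_pos; [lra | apply pow_le; lra] | nra]).
  replace (N * u ^ 4 * ((N ^ 2 - 1) / 6 + u ^ 2 / 120))
    with (u * (N * u ^ 3 * ((N ^ 2 - 1) / 6 + u ^ 2 / 120))) by ring.
  apply Rle_trans with (sin u * (N * u ^ 3 * ((N ^ 2 - 1) / 6 + u ^ 2 / 120)));
    [apply Rmult_le_compat_l | apply Rmult_le_compat_r]; lra.
Qed.

Lemma gap_coefficients (A w rho : R) : 8 <= A -> 0 < rho <= 1 -> 0 < w <= rho ^ 2 / 9 ->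
  (1 - rho) * (A / 4 + w / 80) < (1/2 - w/24) * A * (1/2 - rho ^ 2 / 20).
Proof.
  intros HA Hr Hw. assert (rho ^ 2 <= 1) by nra.
  assert ((1 - rho) * (w / 80) <= A * rho ^ 2 / 5760) by nra.
  assert (A * (1/4 - rho ^ 2 / 36) <= (1/2 - w/24) * A * (1/2 - rho ^ 2 / 20)) by nra.
  nra.
Qed.

(* Take N u = rho := 1 - 2 p N / 3, i.e. p = 3 (1 - rho) / (2 N): after dividing by u^4 the
   two estimates above compare as in gap_coefficients with A = N^2 - 1 and w = u^2. *)
Lemma small_angle_gap_neg (N p : R) : 3 <= N -> 0 <= p < 3 / (2 * N) ->
  exists u, 0 < u /\ N * u <= 1 /\
    (1 - cos u) * (cos (N * u) - cos u) + p * sin u * (N * sin u - sin (N * u)) < 0.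
Proof.
  intros HN Hp.
  set (rho := 1 - 2 * p * N / 3).
  assert (Hrho : 0 < rho <= 1).
  { assert (Hlt : p * (2 * N / 3) < 3 / (2 * N) * (2 * N / 3))
      by (apply Rmult_lt_compat_r; lra).
    replace (3 / (2 * N) * (2 * N / 3)) with 1 in Hlt by (field; lra).
    unfold rho. split; nra. }
  set (u := rho / N). exists u.
  assert (HNu : N * u = rho) by (unfold u; field; lra).
  assert (Hu : 0 < u) by (unfold u; apply Rdiv_lt_0_compat; lra).
  split; [exact Hu | split; [lra|]].
  assert (Hw : 0 < u ^ 2 <= rho ^ 2 / 9).
  { split; [nra|]. rewrite <- HNu.
    assert (9 * u ^ 2 <= N ^ 2 * u ^ 2) by (apply Rmult_le_compat_r; nra). nra. }
  pose proof (gap_coefficients (N ^ 2 - 1) (u ^ 2) rho ltac:(nra) Hrho Hw) as Hgap.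
  pose proof (one_sub_cos_mul_cos_sub_cos_ge N u HN Hu ltac:(lra)) as Hcos.
  pose proof (sin_mul_N_sin_sub_sin_le N u ltac:(lra) Hu ltac:(lra)) as Hsin.
  replace ((N * u) ^ 2) with (rho ^ 2) in Hcos by (rewrite HNu; ring).
  assert (Hp' : p = 3 * (1 - rho) / (2 * N)) by (unfold rho; field; lra).
  assert (p * (sin u * (N * sin u - sin (N * u)))
          <= u ^ 4 * ((1 - rho) * ((N ^ 2 - 1) / 4 + u ^ 2 / 80))).
  { replace (u ^ 4 * ((1 - rho) * ((N ^ 2 - 1) / 4 + u ^ 2 / 80)))
      with (p * (N * u ^ 4 * ((N ^ 2 - 1) / 6 + u ^ 2 / 120)))
      by (rewrite Hp'; field; lra).
    apply Rmult_le_compat_l; lra. }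
  assert (0 < u ^ 4) by (apply pow_lt; lra).
  assert (u ^ 4 * ((1 - rho) * ((N ^ 2 - 1) / 4 + u ^ 2 / 80))
          < u ^ 4 * ((1/2 - u ^ 2 / 24) * (N ^ 2 - 1) * (1/2 - rho ^ 2 / 20)))
    by (apply Rmult_lt_compat_l; lra).
  lra.
Qed.

Lemma kappa_at_exceeds_odd n l : (3 <= n)%nat -> Nat.Odd n ->
  (2 * INR n - 3) / (4 * INR n) < l <= 1/2 ->
  exists x, 0 < x < PI /\ (INR n + 1) / 2 - INR n * l < kappa_at n l x.
Proof.
  intros Hn Ho Hl. pose proof (INR_ge_3 n Hn) as HN. pose proof PI2_3_2.
  replace ((2 * INR n - 3) / (4 * INR n)) with ((1 - 3 / (2 * INR n)) / 2) in Hl by (field; lra).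
  destruct (small_angle_gap_neg (INR n) (1 - 2 * l) HN ltac:(split; lra))
    as [u [Hu [HNu Hlt]]].
  exists (PI - u). split; [nra|]. apply kappa_at_PI_sub_gt; [nra|].
  pose proof (reduced_poly_PI_sub_odd n l u Ho). lra.
Qed.

(** * Odd n: the key inequality *)

(* With x = pi - 2h, the expression bounded in odd_key_inequality equals
   4 sin h * half_angle_form n h. *)
Definition half_angle_form (N h : R) : R :=
  N * sin h * (cos h ^ 2 + 2 * cos (N * h) ^ 2) - 3 * sin (N * h) * cos (N * h) * cos h.

Lemma three_mul_le_of_abs_le (a b c M : R) : 0 <= c -> 15/14 * Rabs a <= M ->
  3 * a * b * c <= M * (c ^ 2 + 2 * b ^ 2).
Proof.
  intros Hc HM. pose proof (Rabs_pos a). pose proof (Rabs_pos b).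
  assert (AMGM : 14/5 * Rabs b * c <= c ^ 2 + 2 * b ^ 2).
  { rewrite <- (pow2_abs b). pose proof (pow2_ge_0 (c - 7/5 * Rabs b)). nra. }
  assert (a * b <= Rabs a * Rabs b) by (rewrite <- Rabs_mult; apply Rle_abs).
  assert (0 <= Rabs b * c) by (apply Rmult_le_pos; lra).
  nra.
Qed.

Lemma taylor_tan_mul_cos_le_sin h : 0 <= h <= 1 -> (h + h ^ 3 / 3) * cos h <= sin h.
Proof.
  intros Hh. pose proof PI2_3_2.
  pose proof (cos_le_taylor4 h ltac:(split; lra)).
  pose proof (sin_ge_taylor3 h ltac:(split; lra)).
  assert (0 <= h ^ 3) by (apply pow_le; lra).
  assert (0 <= h ^ 5 * (1/8 - h ^ 2 / 72)) by (apply Rmult_le_pos; [apply pow_le|]; nra).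
  assert ((h + h ^ 3 / 3) * cos h <= (h + h ^ 3 / 3) * (1 - h ^ 2 / 2 + h ^ 4 / 24))
    by (apply Rmult_le_compat_l; lra).
  assert (E : h - h ^ 3 / 6 - (h + h ^ 3 / 3) * (1 - h ^ 2 / 2 + h ^ 4 / 24)
              = h ^ 5 * (1/8 - h ^ 2 / 72)) by field.
  lra.
Qed.

Lemma taylor_two_add_cos_sub_three_sin t : 0 <= t <= PI / 2 ->
  t ^ 5 / 60 - t ^ 7 / 720 <= t * (2 + cos t) - 3 * sin t.
Proof.
  intros Ht. pose proof PI2_3_2.
  pose proof (cos_ge_taylor6 t ltac:(split; lra)).
  pose proof (sin_le_taylor5 t ltac:(split; lra)).
  assert (t * (1 - t ^ 2 / 2 + t ^ 4 / 24 - t ^ 6 / 720) <= t * cos t)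
    by (apply Rmult_le_compat_l; lra).
  assert (E : t * (2 + (1 - t ^ 2 / 2 + t ^ 4 / 24 - t ^ 6 / 720))
              - 3 * (t - t ^ 3 / 6 + t ^ 5 / 120) = t ^ 5 / 60 - t ^ 7 / 720) by field.
  lra.
Qed.

Lemma half_angle_form_nonneg_small (N h : R) : 3 <= N -> 0 < h -> N * h <= 7/10 ->
  0 <= half_angle_form N h.
Proof.
  intros HN Hh Hy. pose proof PI2_3_2. unfold half_angle_form.
  set (y := N * h) in *.
  assert (Hy0 : 0 < y) by (unfold y; nra).
  assert (Hhy : h <= y / 3) by (unfold y; nra).
  assert (Hsc : h - 2 * h ^ 3 / 3 <= sin h * cos h).
  { pose proof (sin_ge_taylor3 (2 * h) ltac:(split; lra)) as H2h. rewrite sin_2a in H2h. lra. }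
  pose proof (taylor_tan_mul_cos_le_sin h ltac:(split; lra)) as Htan.
  pose proof (taylor_two_add_cos_sub_three_sin (2 * y) ltac:(split; lra)) as Hbase.
  rewrite cos_2a_cos, sin_2a in Hbase.
  assert (Hc : 0 < cos h) by (apply cos_gt_0; lra).
  assert (Hsy : 0 <= sin y <= y) by (split; [apply sin_ge_0 | left; apply sin_lt_x]; lra).
  pose proof (sin_sqr_add_cos_sqr y) as Hab.
  set (s := sin h) in *. set (c := cos h) in *. set (a := sin y) in *. set (b := cos y) in *.
  assert (Hstep : c * (y * (1 + 2 * b ^ 2) - 3 * a * b - 2/3 * y * h ^ 2 * a ^ 2)
                  <= N * s * (c ^ 2 + 2 * b ^ 2) - 3 * a * b * c).
  { assert (N * c * (h - 2 * h ^ 3 / 3) <= N * c * (s * c)) by (apply Rmult_le_compat_l; nra).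
    assert (2 * N * b ^ 2 * ((h + h ^ 3 / 3) * c) <= 2 * N * b ^ 2 * s)
      by (apply Rmult_le_compat_l; nra).
    assert (E : c * (y * (1 + 2 * b ^ 2) - 3 * a * b - 2/3 * y * h ^ 2 * a ^ 2)
      = N * c * (h - 2 * h ^ 3 / 3) + 2 * N * b ^ 2 * ((h + h ^ 3 / 3) * c) - 3 * a * b * c
        - 2/3 * N * h ^ 3 * c * (a ^ 2 + b ^ 2 - 1)) by (unfold y; field).
    rewrite Hab in E. lra. }
  assert (2/3 * y * h ^ 2 * a ^ 2 <= 2/27 * y ^ 5).
  { assert (h ^ 2 <= y ^ 2 / 9) by nra. assert (a ^ 2 <= y ^ 2) by nra.
    assert (h ^ 2 * a ^ 2 <= y ^ 2 / 9 * y ^ 2) by (apply Rmult_le_compat; nra). nra. }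
  assert (0 <= y ^ 5 * (26/135 - 4/45 * y ^ 2)) by (apply Rmult_le_pos; [apply pow_le|]; nra).
  assert (E : ((2 * y) ^ 5 / 60 - (2 * y) ^ 7 / 720) / 2 - 2/27 * y ^ 5
              = y ^ 5 * (26/135 - 4/45 * y ^ 2)) by field.
  assert (0 <= y * (1 + 2 * b ^ 2) - 3 * a * b - 2/3 * y * h ^ 2 * a ^ 2) by nra.
  assert (0 <= c * (y * (1 + 2 * b ^ 2) - 3 * a * b - 2/3 * y * h ^ 2 * a ^ 2))
    by (apply Rmult_le_pos; lra).
  lra.
Qed.

(* Beyond N h = 7/10 the AM-GM bound three_mul_le_of_abs_le applies, except for
   N h in (pi/2, pi] where all terms already have the right sign. *)
Lemma half_angle_form_nonneg (N h : R) : 3 <= N -> 0 < h < PI / 2 -> 0 <= half_angle_form N h.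
Proof.
  intros HN Hh. pose proof PI2_3_2. pose proof PI_4.
  destruct (Rle_lt_dec (N * h) (7/10)) as [Hy|Hy];
    [now apply half_angle_form_nonneg_small; lra|].
  unfold half_angle_form. set (y := N * h) in *.
  assert (Hc : 0 < cos h) by (apply cos_gt_0; lra).
  assert (Hs : 0 < sin h) by (apply sin_gt_0; lra).
  assert (HNs : y - y * h ^ 2 / 6 <= N * sin h).
  { pose proof (sin_ge_taylor3 h ltac:(split; lra)).
    assert (N * (h - h ^ 3 / 6) <= N * sin h) by (apply Rmult_le_compat_l; lra).
    unfold y. nra. }
  assert (Hfar : 15/14 * Rabs (sin y) <= N * sin h ->
    0 <= N * sin h * (cos h ^ 2 + 2 * cos y ^ 2) - 3 * sin y * cos y * cos h)
    by (intro; pose proof (three_mul_le_of_abs_le (sin y) (cos y) (cos h) (N * sin h)); lra).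
  destruct (Rle_lt_dec y (PI / 2)) as [Hy2|Hy2].
  - apply Hfar. rewrite Rabs_pos_eq by (apply sin_ge_0; lra).
    pose proof (sin_le_taylor5 y ltac:(split; lra)).
    assert (h <= y / 3) by (unfold y; nra).
    assert (y * h ^ 2 <= y * (y ^ 2 / 9)) by (apply Rmult_le_compat_l; nra).
    assert (0 <= (y ^ 2 - 49/100) * (4 - y ^ 2)) by (apply Rmult_le_pos; nra).
    assert (0 <= y * (-1/14 + (15/84 - 1/54) * y ^ 2 - y ^ 4 / 112))
      by (apply Rmult_le_pos; nra).
    assert (E : y - y ^ 3 / 54 - 15/14 * (y - y ^ 3 / 6 + y ^ 5 / 120)
                = y * (-1/14 + (15/84 - 1/54) * y ^ 2 - y ^ 4 / 112)) by field.
    lra.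
  - destruct (Rle_lt_dec y PI) as [HyP|HyP].
    + assert (0 <= sin y) by (apply sin_ge_0; lra).
      assert (cos y <= 0) by (apply cos_le_0; lra).
      assert (0 <= sin y * - cos y * cos h) by (apply Rmult_le_pos; [apply Rmult_le_pos|]; lra).
      assert (0 <= N * sin h * (cos h ^ 2 + 2 * cos y ^ 2)) by (apply Rmult_le_pos; nra).
      lra.
    + apply Hfar.
      assert (Rabs (sin y) <= 1) by (apply Rabs_le; apply SIN_bound).
      assert (PI * (1 - PI ^ 2 / 24) <= y * (1 - h ^ 2 / 6))
        by (apply Rmult_le_compat; nra).
      nra.
Qed.

Lemma odd_key_inequality n x : (3 <= n)%nat -> Nat.Odd n -> 0 < x < PI ->
  0 <= 2 * INR n * (1 + cos x) * (1 - cos (INR n * x))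
       + INR n * sin x ^ 2 - 3 * sin x * sin (INR n * x).
Proof.
  intros Hn Ho Hx. set (h := (PI - x) / 2).
  assert (Hh : 0 < h < PI / 2) by (unfold h; lra).
  replace x with (PI - 2 * h) by (unfold h; field).
  destruct (cos_sin_INR_mul_PI_sub_odd n (2 * h) Ho) as [-> ->].
  rewrite sin_PI_x, Rtrigo_facts.cos_pi_minus.
  replace (INR n * (2 * h)) with (2 * (INR n * h)) by ring.
  rewrite !sin_2a, cos_2a_sin, cos_2a_cos.
  assert (Hs : 0 < sin h) by (apply sin_gt_0; lra).
  assert (0 <= 4 * sin h * half_angle_form (INR n) h)
    by (apply Rmult_le_pos; [lra | exact (half_angle_form_nonneg _ h (INR_ge_3 n Hn) Hh)]).
  unfold half_angle_form in *. lra.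
Qed.

Lemma kappa_at_le_odd n l x : (3 <= n)%nat -> Nat.Odd n ->
  l <= (2 * INR n - 3) / (4 * INR n) -> 0 < x < PI ->
  kappa_at n l x <= (INR n + 1) / 2 - INR n * l.
Proof.
  intros Hn Ho Hl Hx. pose proof (INR_ge_3 n Hn) as HN.
  assert (Hs : 0 < sin x) by (apply sin_gt_0; lra).
  apply kappa_at_le_iff; [exact Hs|]. unfold reduced_poly.
  pose proof (odd_key_inequality n x Hn Ho Hx) as K.
  pose proof (Rabs_sin_INR_mul_le n x ltac:(lra)) as HS.
  pose proof (Rle_abs (sin (INR n * x))).
  set (N := INR n) in *. set (S := sin (N * x)) in *. set (s := sin x) in *.
  set (p := (2 * N - 3) / (2 * N) - 2 * l).
  assert (Hp : 0 <= p).
  { assert ((2 * N - 3) / (2 * N) = 2 * ((2 * N - 3) / (4 * N))) by (field; lra).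
    unfold p. lra. }
  assert (0 <= p * (s * (N * s - S))) by (apply Rmult_le_pos; [lra | apply Rmult_le_pos; lra]).
  assert (0 <= (2 * N * (1 + cos x) * (1 - cos (N * x)) + N * s ^ 2 - 3 * s * S) / (2 * N))
    by (unfold Rdiv; apply Rmult_le_pos; [lra | left; apply Rinv_0_lt_compat; lra]).
  assert (E : (1 + cos x) * (1 - cos (N * x)) + (2 * l - 1) * s * S
              - 2 * s ^ 2 * (1 - ((N + 1) / 2 - N * l))
              = (2 * N * (1 + cos x) * (1 - cos (N * x)) + N * s ^ 2 - 3 * s * S) / (2 * N)
                + p * (s * (N * s - S))) by (unfold p; field; lra).
  lra.
Qed.

Theorem theorem4 (n : nat) (Hn : (3 <= n)%nat) (lambda : R) :
  exists kappa0 : R,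
    (forall kappa : R, in_Pn n kappa lambda <-> kappa0 <= kappa) /\
    (Nat.Odd n ->
       (lambda <= (2 * INR n - 3) / (4 * INR n) ->
          kappa0 = (INR n + 1) / 2 - INR n * lambda) /\
       ((2 * INR n - 3) / (4 * INR n) < lambda <= 1 / 2 ->
          kappa0 > (INR n + 1) / 2 - INR n * lambda) /\
       (1 / 2 < lambda -> kappa0 > 1)) /\
    (Nat.Even n ->
       (lambda < 1 / 2 -> kappa0 > 1) /\
       (1 / 2 <= lambda -> kappa0 = INR n * lambda - (INR n - 2) / 2)).
Proof.
  destruct (kappa_at_values_lub n lambda) as [k0 Hk0].
  assert (Hhalf : (2 * INR n - 3) / (4 * INR n) < 1 / 2).
  { pose proof (INR_ge_3 n Hn). apply Rmult_lt_reg_r with (4 * INR n); [lra|].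
    replace ((2 * INR n - 3) / (4 * INR n) * (4 * INR n)) with (2 * INR n - 3) by (field; lra).
    lra. }
  exists k0. split; [|split].
  - intros k. apply (in_Pn_iff_threshold n lambda k0 Hk0). lia.
  - intros Ho. split; [|split].
    + intros Hl. apply (threshold_eq n lambda k0 Hk0).
      * intros x Hx. now apply kappa_at_le_odd.
      * intros eps Heps. apply kappa_at_near_PI_odd; auto; lra.
    + intros Hl. apply (threshold_gt n lambda k0 Hk0). now apply kappa_at_exceeds_odd.
    + intros Hl. apply (threshold_gt n lambda k0 Hk0), kappa_at_gt_one; [exact Hn | lra].
  - intros He. split.
    + intros Hl. apply (threshold_gt n lambda k0 Hk0), kappa_at_gt_one; [exact Hn | lra].
    + intros Hl. apply (threshold_eq n lambda k0 Hk0).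
      * intros x Hx. now apply kappa_at_le_of_half_le.
      * intros eps Heps. apply kappa_at_near_PI_even; auto; lia.
Qed.
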